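(* Let $\kappa_{\mathrm{charge}(3)}$ denote the growth rate of the charge(3) model and $\kappa_{Q\text{-charge}}$ the growth rate of the $Q$-charge model on the square lattice, as defined in the context. Then $\kappa_{\mathrm{charge}(3)} = \kappa_{Q\text{-charge}}$.
   Context: Work on the finite square lattice $[1,N]^2\subset\mathbb{Z}^2$, whose $N^2$ vertices carry spins $\oplus=+1$ or $\ominus=-1$. A spin configuration satisfies the charge(3) constraint if for every horizontal or vertical segment of consecutive vertices, the sum of the spins along that segment lies between $-3$ and $+3$. Let $Z^{\mathrm{ch}}_N$ be the number of charge(3) configurations on $[1,N]^2$. The $Q$-charge model places states on the bonds of $[1,N]^2$, including boundary bonds (so every vertex has exactly four incident bonds: north, west, east, south). Each bond state is an integer in $\{0,1,2,3\}$. A labelling is valid if at every vertex with north bond state $a$, west bond state $b$, east bond state $c$ and south bond state $d$, one has $d-a=c-b=\pm 1$ (both differences equal to the same value $+1$ or $-1$). Let $Z^{Q}_N$ be the number of valid $Q$-charge labellings. (Intuitively, the state of a horizontal (resp. vertical) bond is the cumulative charge after reading the spin to its west (resp. north), so a charge(3) configuration maps to one or more $Q$-charge configurations.) The growth rate of a model is $\kappa=\lim_{N\to\infty} Z_N^{1/N^2}$, where $Z_N$ is its number of valid configurations on $[1,N]^2$ (these limits are taken to exist). *)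

From Stdlib Require Import Reals.
From Coquelicot Require Import Coquelicot.
From mathcomp Require Import all_boot all_algebra.

Set Implicit Arguments.
Unset Strict Implicit.
Unset Printing Implicit Defensive.

Import GRing.Theory.
Local Open Scope ring_scope.

(* A spin configuration on [1,N]^2 : vertex (i,j) (row i, column j, 0-based)
   carries spin +1 (true) or -1 (false). *)
Definition spin (b : bool) : int := if b then 1 else -1.

Definition charge3 (N : nat) (s : {ffun 'I_N * 'I_N -> bool}) : bool :=
  [forall i : 'I_N, forall a : 'I_N, forall b : 'I_N,
     (leq a b) ==>
     [&& (-3 <= \sum_(j : 'I_N | (leq a j && leq j b)) spin (s (i, j)) <= 3)
       & (-3 <= \sum_(j : 'I_N | (leq a j && leq j b)) spin (s (j, i)) <= 3)]].

Definition Zch (N : nat) : nat := #|[set s : {ffun 'I_N * 'I_N -> bool} | charge3 s]|.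

(* Horizontal bonds: row i (< N), position k (<= N); bond k is the west bond of
   vertex (i,k) and the east bond of vertex (i,k-1); positions 0 and N are the
   boundary bonds.  Vertical bonds: position k (<= N), column j (< N); bond k is
   the north bond of vertex (k,j) and the south bond of vertex (k-1,j). *)
Definition Qconf (N : nat) : finType :=
  ({ffun 'I_N * 'I_N.+1 -> 'I_4} * {ffun 'I_N.+1 * 'I_N -> 'I_4})%type.

Definition st (x : 'I_4) : int := (nat_of_ord x)%:Z.

Definition Qvalid (N : nat) (c : Qconf N) : bool :=
  [forall i : 'I_N, forall j : 'I_N,
    let a := st (c.2 (widen_ord (leqnSn N) i, j)) in   (* north *)
    let b := st (c.1 (i, widen_ord (leqnSn N) j)) in   (* west  *)
    let e := st (c.1 (i, lift ord0 j)) in              (* east  *)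
    let d := st (c.2 (lift ord0 i, j)) in              (* south *)
    (d - a == e - b) && ((d - a == 1) || (d - a == -1))].

Definition ZQ (N : nat) : nat := #|[set c : Qconf N | Qvalid c]|.

Definition rootN2 (Z : nat -> nat) (N : nat) : R :=
  Rpower (INR (Z N)) (/ INR (N * N)%N).

(* Reading the horizontal (resp. vertical) bond states of a valid Q-charge labelling as
   cumulative charges, the spin at each vertex is the common difference d - a = c - b.
   This gives a map to charge(3) configurations (a difference of two states in {0..3}
   lies in [-3,3]), which is injective once the 2N boundary states on the west and north
   sides are recorded; hence Z^Q_N <= 16^N Z^ch_N.  Conversely every charge(3)
   configuration arises: along each row and column, the partial sums of the spins
   minus their minimum take values in {0..3}.  So Z^ch_N <= Z^Q_N <= 16^N Z^ch_N,
   and 16^(N/N^2) -> 1 forces the two growth rates to agree. *)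
From Stdlib Require Import Reals Lra.
From Coquelicot Require Import Coquelicot.
From mathcomp Require Import all_boot all_order all_algebra.
From mathcomp Require Import zify.

Set Implicit Arguments.
Unset Strict Implicit.
Unset Printing Implicit Defensive.

Import Order.TTheory GRing.Theory Num.Theory.
Local Open Scope ring_scope.

Section PartialSums.
Variables (N : nat) (g : 'I_N -> int).

Definition psum (k : nat) : int := \sum_(j : 'I_N | (j < k)%N) g j.

Definition segsum (a b : nat) : int :=
  \sum_(j : 'I_N | (a <= j)%N && (j <= b)%N) g j.

Lemma psumB k1 k2 : (k1 <= k2)%N ->
  psum k2 - psum k1 = \sum_(j : 'I_N | (k1 <= j)%N && (j < k2)%N) g j.
Proof.
move=> le12; rewrite /psum (bigID (fun j : 'I_N => (j < k1)%N)) /=.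
have -> : \sum_(j < N | (j < k2)%N && (j < k1)%N) g j = psum k1.
  apply: eq_bigl => j; apply/idP/idP => [/andP[]//|lt1].
  by rewrite lt1 andbT (leq_trans lt1 le12).
by rewrite addrC addrK; apply: eq_bigl => j; rewrite -leqNgt andbC.
Qed.

Lemma psumB_segsum k1 k2 : (k1 < k2)%N -> psum k2 - psum k1 = segsum k1 k2.-1.
Proof.
move=> lt12; rewrite psumB ?(ltnW lt12) //.
by apply: eq_bigl => j; case: k2 lt12.
Qed.

Lemma psum0 : psum 0 = 0.
Proof. by rewrite /psum big_pred0. Qed.

Lemma psumS (j : 'I_N) : psum j.+1 = psum j + g j.
Proof.
have := psumB (leqnSn j); rewrite (big_pred1 j) => [<-|i /=]; first by rewrite addrC subrK.
by rewrite -eqn_leq; apply/eqP/eqP => [/val_inj|->].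
Qed.

Variable m : int.
Hypothesis m_ge0 : 0 <= m.
Hypothesis segsum_bounded :
  forall a b : 'I_N, (a <= b)%N -> -m <= segsum a b <= m.

Lemma psumB_le k k' : (k <= N)%N -> (k' <= N)%N -> psum k - psum k' <= m.
Proof.
have seg_le (k1 k2 : nat) : (k1 < k2)%N -> (k2 <= N)%N ->
    -m <= psum k2 - psum k1 <= m.
  move=> lt12 le2N; rewrite psumB_segsum //.
  have lt2 : (k2.-1 < N)%N by case: k2 lt12 le2N.
  have lt1 : (k1 < N)%N by apply: leq_trans lt12 le2N.
  have le12 : (k1 <= k2.-1)%N by case: (k2) lt12.
  exact: (@segsum_bounded (Ordinal lt1) (Ordinal lt2)).
move=> leN le'N; case: (ltngtP k' k) => [lt|lt|->]; last by rewrite subrr.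
- by have /andP[_ ->] := seg_le _ _ lt leN.
- by have /andP[+ _] := seg_le _ _ lt le'N; rewrite -lerNl opprB.
Qed.

Definition psum_min : int :=
  psum (Order.arg_min ord0 xpredT (fun k : 'I_N.+1 => psum k)).

Lemma psum_min_bounds k : (k <= N)%N -> 0 <= psum k - psum_min <= m.
Proof.
move=> leN; rewrite /psum_min.
case: (@arg_minP _ int _ ord0 xpredT (fun k : 'I_N.+1 => psum k) isT) => k0 _ min_k0.
have := min_k0 (inord k) isT; rewrite /= inordK // => le0.
by rewrite subr_ge0 le0 psumB_le // -ltnS.
Qed.

End PartialSums.

Section QchargeSpins.
Variable N : nat.
Implicit Types (s : {ffun 'I_N * 'I_N -> bool}) (c : Qconf N).

Definition row_spins s (i : 'I_N) (j : 'I_N) : int := spin (s (i, j)).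
Definition col_spins s (j : 'I_N) (i : 'I_N) : int := spin (s (i, j)).

Lemma charge3P s : charge3 s ->
  (forall i (a b : 'I_N), (a <= b)%N -> -3 <= segsum (row_spins s i) a b <= 3) /\
  (forall j (a b : 'I_N), (a <= b)%N -> -3 <= segsum (col_spins s j) a b <= 3).
Proof.
by move=> /forallP ch3; split=> i a b ab;
  have /forallP/(_ a)/forallP/(_ b)/implyP/(_ ab)/andP[] := ch3 i.
Qed.

Lemma st_sub_bounds (x y : 'I_4) : -3 <= st x - st y <= 3.
Proof. by have := ltn_ord x; have := ltn_ord y; rewrite /st; lia. Qed.

Lemma st_inj : injective st.
Proof. by move=> x y /eqP; rewrite /st eqz_nat => /eqP /val_inj. Qed.

Lemma st_inord (x : int) : 0 <= x <= 3 -> st (inord `|x|%N : 'I_4) = x.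
Proof. by case/andP=> x_ge0 x_le3; rewrite /st inordK ?gez0_abs //; lia. Qed.

Lemma widen_inord (j : 'I_N) : widen_ord (leqnSn N) j = inord j.
Proof. by apply: val_inj; rewrite /= inordK // ltnS ltnW. Qed.

Lemma lift0_inord (j : 'I_N) : lift ord0 j = inord j.+1 :> 'I_N.+1.
Proof. by apply: val_inj; rewrite /= inordK // /bump /= ltnS. Qed.

Definition spins_of c : {ffun 'I_N * 'I_N -> bool} :=
  [ffun p => st (c.1 (p.1, lift ord0 p.2)) - st (c.1 (p.1, widen_ord (leqnSn N) p.2)) == 1].

Lemma Qvalid_spins_of c : Qvalid c -> forall i j,
  spin (spins_of c (i, j)) = st (c.1 (i, inord j.+1)) - st (c.1 (i, inord j)) /\
  spin (spins_of c (i, j)) = st (c.2 (inord i.+1, j)) - st (c.2 (inord i, j)).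
Proof.
move=> /forallP valid i j; have /forallP/(_ j)/andP[/eqP eq_diff /orP pm1] := valid i.
rewrite ffunE /= -!widen_inord -!lift0_inord -eq_diff /spin.
by case: pm1 => /eqP ->.
Qed.

Lemma Qrow_psum c : Qvalid c -> forall i (k : nat), (k <= N)%N ->
  st (c.1 (i, inord k)) = st (c.1 (i, inord 0)) + psum (row_spins (spins_of c) i) k.
Proof.
move=> valid i; elim=> [|k IHk] ltkN; first by rewrite psum0 addr0.
rewrite (psumS _ (Ordinal ltkN)) addrA -IHk ?(ltnW ltkN) // /row_spins.
by have [-> _] := Qvalid_spins_of valid i (Ordinal ltkN); rewrite addrC subrK.
Qed.

Lemma Qcol_psum c : Qvalid c -> forall j (k : nat), (k <= N)%N ->
  st (c.2 (inord k, j)) = st (c.2 (inord 0, j)) + psum (col_spins (spins_of c) j) k.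
Proof.
move=> valid j; elim=> [|k IHk] ltkN; first by rewrite psum0 addr0.
rewrite (psumS _ (Ordinal ltkN)) addrA -IHk ?(ltnW ltkN) // /col_spins.
by have [_ ->] := Qvalid_spins_of valid (Ordinal ltkN) j; rewrite addrC subrK.
Qed.

Lemma charge3_spins_of c : Qvalid c -> charge3 (spins_of c).
Proof.
move=> valid; apply/forallP => i; apply/forallP => a; apply/forallP => b.
apply/implyP => ab; have ltab : (a < b.+1)%N by rewrite ltnS.
have leaN : (a <= N)%N := ltnW (ltn_ord a).
have lebN : (b.+1 <= N)%N := ltn_ord b.
apply/andP; split.
- change (-3 <= segsum (row_spins (spins_of c) i) a b <= 3).
  have /= <- := psumB_segsum (row_spins (spins_of c) i) ltab.
  have -> : psum (row_spins (spins_of c) i) b.+1 - psum (row_spins (spins_of c) i) a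
            = st (c.1 (i, inord b.+1)) - st (c.1 (i, inord a)).
    by rewrite (Qrow_psum valid _ lebN) (Qrow_psum valid _ leaN) opprD addrACA subrr add0r.
  exact: st_sub_bounds.
- change (-3 <= segsum (col_spins (spins_of c) i) a b <= 3).
  have /= <- := psumB_segsum (col_spins (spins_of c) i) ltab.
  have -> : psum (col_spins (spins_of c) i) b.+1 - psum (col_spins (spins_of c) i) a
            = st (c.2 (inord b.+1, i)) - st (c.2 (inord a, i)).
    by rewrite (Qcol_psum valid _ lebN) (Qcol_psum valid _ leaN) opprD addrACA subrr add0r.
  exact: st_sub_bounds.
Qed.

Definition qcharge_code c :=
  (spins_of c, [ffun i : 'I_N => c.1 (i, ord0)], [ffun j : 'I_N => c.2 (ord0, j)]).

Lemma qcharge_code_inj : {in [set c | Qvalid c] &, injective qcharge_code}.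
Proof.
move=> [c1 c2] [c1' c2']; rewrite !inE => valid valid' [eq_spins eq_west eq_north].
have inord0 : inord 0 = ord0 :> 'I_N.+1 by apply: val_inj; rewrite /= inordK.
congr pair; apply/ffunP => -[x k]; apply: st_inj.
- have lekN : (k <= N)%N by rewrite -ltnS.
  rewrite -(inord_val k) (Qrow_psum valid _ lekN) (Qrow_psum valid' _ lekN) eq_spins inord0.
  have west_x : c1 (x, ord0) = c1' (x, ord0).
    by move/ffunP: eq_west => /(_ x); rewrite 2!ffunE.
  by rewrite [(c1, c2).1]/= [(c1', c2').1]/= west_x.
- have lexN : (x <= N)%N by rewrite -ltnS.
  rewrite -(inord_val x) (Qcol_psum valid _ lexN) (Qcol_psum valid' _ lexN) eq_spins inord0.
  have north_k : c2 (ord0, k) = c2' (ord0, k).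
    by move/ffunP: eq_north => /(_ k); rewrite 2!ffunE.
  by rewrite [(c1, c2).2]/= [(c1', c2').2]/= north_k.
Qed.

Section FromSpins.
Variable s : {ffun 'I_N * 'I_N -> bool}.
Hypothesis ch3 : charge3 s.

Definition qcharge_of : Qconf N :=
  ([ffun p : 'I_N * 'I_N.+1 =>
     inord `|psum (row_spins s p.1) p.2 - psum_min (row_spins s p.1)|%N],
   [ffun p : 'I_N.+1 * 'I_N =>
     inord `|psum (col_spins s p.2) p.1 - psum_min (col_spins s p.2)|%N]).

Lemma st_qcharge_of_row i (k : 'I_N.+1) :
  st (qcharge_of.1 (i, k)) = psum (row_spins s i) k - psum_min (row_spins s i).
Proof.
rewrite ffunE /= st_inord //.
exact: (psum_min_bounds _ ((charge3P ch3).1 i) (ltn_ord k)).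
Qed.

Lemma st_qcharge_of_col j (k : 'I_N.+1) :
  st (qcharge_of.2 (k, j)) = psum (col_spins s j) k - psum_min (col_spins s j).
Proof.
rewrite ffunE /= st_inord //.
exact: (psum_min_bounds _ ((charge3P ch3).2 j) (ltn_ord k)).
Qed.

Lemma qcharge_of_row i j :
  st (qcharge_of.1 (i, lift ord0 j)) - st (qcharge_of.1 (i, widen_ord (leqnSn N) j))
  = spin (s (i, j)).
Proof. by rewrite !st_qcharge_of_row lift0 psumS opprB addrA subrK addrC addKr. Qed.

Lemma qcharge_of_col i j :
  st (qcharge_of.2 (lift ord0 i, j)) - st (qcharge_of.2 (widen_ord (leqnSn N) i, j))
  = spin (s (i, j)).
Proof. by rewrite !st_qcharge_of_col lift0 psumS opprB addrA subrK addrC addKr. Qed.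

Lemma Qvalid_qcharge_of : Qvalid qcharge_of.
Proof.
apply/forallP => i; apply/forallP => j /=.
by rewrite qcharge_of_row qcharge_of_col eqxx; case: (s (i, j)).
Qed.

Lemma spins_of_qcharge_of : spins_of qcharge_of = s.
Proof. by apply/ffunP => -[i j]; rewrite ffunE /= qcharge_of_row; case: (s (i, j)). Qed.

End FromSpins.

End QchargeSpins.

Lemma Zch_le_ZQ N : (Zch N <= ZQ N)%N.
Proof.
apply: leq_trans (leq_imset_card (@spins_of N) _); apply: subset_leq_card.
apply/subsetP => s; rewrite inE => ch3; apply/imsetP.
by exists (qcharge_of s); rewrite ?inE ?Qvalid_qcharge_of ?spins_of_qcharge_of.
Qed.

Lemma ZQ_le_Zch N : (ZQ N <= Zch N * 16 ^ N)%N.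
Proof.
rewrite /ZQ -(card_in_imset (@qcharge_code_inj N)).
apply: leq_trans (subset_leq_card (_ : _ \subset setX (setX [set s | charge3 s] setT) setT)) _.
  apply/subsetP => y /imsetP[c]; rewrite inE => valid ->.
  by rewrite !inE /= charge3_spins_of.
by rewrite !cardsX !cardsT !card_ffun !card_ord -mulnA -expnMn.
Qed.

Local Close Scope ring_scope.
Local Open Scope R_scope.

Lemma INR_expn (k n : nat) : INR (k ^ n) = INR k ^ n.
Proof. by elim: n => [|n IHn] //=; rewrite expnS mult_INR IHn. Qed.

Lemma rootN2_sandwich (Z1 Z2 : nat -> nat) (k N : nat) : (0 < N)%N -> (0 < k)%N ->
  (Z1 N <= Z2 N <= Z1 N * k ^ N)%N ->
  rootN2 Z1 N <= rootN2 Z2 N <= Rpower (INR k) (/ INR N) * rootN2 Z1 N.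
Proof.
move=> N_gt0 k_gt0 /andP[le12 le2k].
have INR_N_gt0 : 0 < INR N by apply: lt_0_INR; lia.
have INR_k_ge1 : 1 <= INR k by apply: (le_INR 1); lia.
have e_ge0 : 0 <= / INR (N * N).
  by apply/Rlt_le/Rinv_0_lt_compat; rewrite mult_INR; apply: Rmult_lt_0_compat.
have kroot_ge1 : 1 <= Rpower (INR k) (/ INR N).
  rewrite -(Rpower_O (INR k)); last lra.
  by apply: Rle_Rpower => //; apply/Rlt_le/Rinv_0_lt_compat.
rewrite /rootN2; case: (posnP (Z1 N)) => [Z1_eq0 | Z1_gt0].
  have -> : Z2 N = Z1 N by move: le2k; rewrite Z1_eq0; lia.
  have root_gt0 : 0 < Rpower (INR (Z1 N)) (/ INR (N * N)) by apply: exp_pos.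
  by split; nra.
have INR_Z1_gt0 : 0 < INR (Z1 N) by apply: lt_0_INR; lia.
have le12R : INR (Z1 N) <= INR (Z2 N) by apply: le_INR; apply/ssrnat.leP.
split; first by apply: Rle_Rpower_l.
apply: Rle_trans (Rle_Rpower_l _ (INR (Z1 N * k ^ N)) _ e_ge0 _) _.
  by split; [lra | apply: le_INR; apply/ssrnat.leP].
rewrite mult_INR INR_expn -Rpower_mult_distr //; last by apply: pow_lt; lra.
rewrite Rmult_comm -Rpower_pow ?Rpower_mult; last lra.
have -> : INR N * / INR (N * N) = / INR N by rewrite mult_INR; field; lra.
exact: Rle_refl.
Qed.

Lemma is_lim_seq_Rpower_inv (c : R) : is_lim_seq (fun n => Rpower c (/ INR n.+1)) 1.
Proof.
have inv_lim : is_lim_seq (fun n => / INR n.+1) 0.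
  apply: (is_lim_seq_inv (fun n => INR n.+1) p_infty) => //.
  exact: (is_lim_seq_incr_1 INR p_infty).1 is_lim_seq_INR.
have exp_cont : continuity_pt exp (0 * ln c).
  exact: derivable_continuous_pt (derivable_pt_exp _).
rewrite -exp_0 -(Rmult_0_l (ln c)).
exact: is_lim_seq_continuous exp_cont (is_lim_seq_scal_r _ _ _ inv_lim).
Qed.

Lemma is_lim_seq_root_sandwich_eq (u v : nat -> R) (c lu lv : R) :
  (forall n, u n.+1 <= v n.+1 <= Rpower c (/ INR n.+1) * u n.+1) ->
  is_lim_seq u lu -> is_lim_seq v lv -> lu = lv.
Proof.
move=> sandwich /is_lim_seq_incr_1 lim_u /is_lim_seq_incr_1 lim_v.
apply: Rle_antisym.
  exact: is_lim_seq_le (fun n => proj1 (sandwich n)) lim_u lim_v.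
have lim_cu := is_lim_seq_mult' _ _ _ _ (is_lim_seq_Rpower_inv c) lim_u.
rewrite Rmult_1_l in lim_cu.
exact: is_lim_seq_le (fun n => proj2 (sandwich n)) lim_v lim_cu.
Qed.

Theorem mainTheorem1 (kappa_ch kappa_Q : R) :
  is_lim_seq (rootN2 Zch) kappa_ch ->
  is_lim_seq (rootN2 ZQ) kappa_Q ->
  kappa_ch = kappa_Q.
Proof.
apply: (is_lim_seq_root_sandwich_eq (c := INR 16)) => n.
by apply: rootN2_sandwich => //; rewrite Zch_le_ZQ ZQ_le_Zch.
Qed.
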